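(* Let $\Gamma$ be a connected $\mathbb Z$-leg-weighted graph with edge set $E$, and let $F_\Gamma$ be the set of all faces of the cones $c_w$ as $w$ runs over $W(\Gamma)$. Then $F_\Gamma$ is a finite fan in $\mathbb Q_{\ge0}^E$.
   Context: A graph consists of finite sets $V$ (vertices) and $H$ (half-edges), a map $\mathrm{end}\colon H\to V$, an involution $i$ of $H$, a genus $g\colon V\to\mathbb Z_{\ge0}$ and an integer twist $k$. Legs are fixed points of $i$; edges are pairs $\{h,i(h)\}$ with $h\ne i(h)$; a directed edge is a non-leg half-edge $h$ from $\mathrm{end}(h)$ to $\mathrm{end}(i(h))$. $\mathrm{val}(v)$ counts non-leg half-edges at $v$, $\kappa(v)=2g(v)-2+\mathrm{val}(v)$, $g(\Gamma)=b_1(\Gamma)+\sum_v g(v)$. A cycle is a closed walk of directed edges repeating no vertex or undirected edge. A weighting is $w\colon H\to\mathbb Z$ with $w(h)+w(i(h))=0$ for $h\ne i(h)$ and $\sum_{\mathrm{end}(h)=v}w(h)+k\kappa(v)=0$ for all $v$; $W(\Gamma)$ is the set of weightings with prescribed integer leg values (summing to $-k(2g(\Gamma)-2)$). For a directed edge $e$ of a cycle $\gamma$, $w_\gamma(e)$ is the value of $w$ at the source half-edge of $e$. $c_w\subseteq\mathbb Q_{\ge0}^E$ is the cone of $t$ with $\sum_{e\in\gamma}w_\gamma(e)t(e)=0$ for all cycles $\gamma$. *)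

From HB Require Import structures.
From mathcomp Require Import all_boot all_order all_algebra.
From mathcomp Require Import boolp classical_sets cardinality.
Set Implicit Arguments. Unset Strict Implicit. Unset Printing Implicit Defensive.
Import Order.TTheory GRing.Theory Num.Theory.
Local Open Scope ring_scope.
Local Open Scope classical_set_scope.

Section Graph.
(* A graph: vertices V, half-edges H, end map [endp], involution [i]
   (assumed involutive where needed), genus [g], twist [k]. *)
Variables (V H : finType) (endp : H -> V) (i : H -> H) (g : V -> nat) (k : int).

Definition is_leg (h : H) : bool := i h == h.

Definition is_edge_set (A : {set H}) : bool :=
  [exists h, (i h != h) && (A == (finset.set1 h :|: finset.set1 (i h)))].
Definition Edge : Type := {A : {set H} | is_edge_set A}.
HB.instance Definition _ := Finite.on Edge.

(* the coordinate of t : Q^E at the undirected edge underlying h (0 for legs) *)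
Definition tval (t : Edge -> rat) (h : H) : rat :=
  if @insub _ is_edge_set Edge (finset.set1 h :|: finset.set1 (i h)) is Some e then t e else 0.

Definition val_v (v : V) : nat := #|[pred h | (endp h == v) && ~~ is_leg h]|.
Definition kappa (v : V) : int := (2 * (g v)%:Z - 2 + (val_v v)%:Z).

Definition adj : rel V :=
  fun u v => [exists h, [&& ~~ is_leg h, endp h == u & endp (i h) == v]].
Definition graph_connected : Prop := forall u v, connect adj u v.

Definition n_components : nat := n_comp adj predT.
Definition b1 : int := (#|{: Edge}|%:Z - #|V|%:Z + (n_components)%:Z).
Definition genus_total : int := b1 + (\sum_(v : V) g v)%:Z.

Definition is_weighting (w : H -> int) : Prop :=
  (forall h, ~~ is_leg h -> w h + w (i h) = 0) /\
  (forall v, \sum_(h | endp h == v) w h + k * kappa v = 0).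

Definition W_Gamma (legw : H -> int) : set (H -> int) :=
  [set w | is_weighting w /\ forall h, is_leg h -> w h = legw h].

Definition is_cycle (s : seq H) : bool :=
  [&& size s != 0%N, all (fun h => ~~ is_leg h) s,
      cycle (fun h h' => endp (i h) == endp h') s,
      uniq (map endp s) & uniq (map (fun h => (finset.set1 h :|: finset.set1 (i h))) s)].

Definition cone_w (w : H -> int) : set (Edge -> rat) :=
  [set t | (forall e, 0 <= t e) /\
     forall s, is_cycle s -> \sum_(h <- s) (w h)%:~R * tval t h = 0].

End Graph.
Arguments cone_w [V H] endp i w _.
Arguments tval [H] i t h.

Section Fans.
Variable E : finType.

Definition lin (a t : E -> rat) : rat := \sum_(e : E) a e * t e.

Definition polyhedral_cone (C : set (E -> rat)) : Prop :=
  exists (n : nat) (A : 'I_n -> E -> rat),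
    C = [set t | forall j, 0 <= lin (A j) t].

Definition face (F C : set (E -> rat)) : Prop :=
  exists a : E -> rat, (forall t, C t -> 0 <= lin a t) /\
    F = [set t | C t /\ lin a t = 0].

Definition fan (S : set (set (E -> rat))) : Prop :=
  [/\ forall C, S C -> polyhedral_cone C,
      forall C, S C -> forall t, C t -> forall e, 0 <= t e,
      forall C F, S C -> face F C -> S F &
      forall C D, S C -> S D -> face (C `&` D) C /\ face (C `&` D) D].

Definition finite_fan (S : set (set (E -> rat))) : Prop :=
  finite_set S /\ fan S.
End Fans.

Definition F_Gamma {V H : finType} (endp : H -> V) (i : H -> H) (g : V -> nat)
  (k : int) (legw : H -> int) : set (set (Edge i -> rat)) :=
  [set F | exists w, W_Gamma endp i g k legw w /\ face F (cone_w endp i w)].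
Arguments F_Gamma {V H} endp i g k legw _.

(* Since c_w is the nonnegative orthant cut by a linear subspace, each of its faces
   is c_w intersected with coordinate hyperplanes t_e = 0, and so is each face of a
   face.  For t in c_w the flow h |-> w(h) t(h) sums to zero along every cycle, hence
   along every closed walk, so on the connected graph it is the gradient of a
   potential phi on the vertices.  Two consequences give the fan.
   - If t lies in c_w and c_w', then d = w - w' is divergence free, and pairing d with
     the gradient of phi gives sum_h d(h)^2 t(h) = 0: w and w' agree wherever t is
     positive, so c_w /\ c_w' is the face of c_w cut out by sum_h d(h)^2 t(h).
   - Summing w over the half-edges leaving a sublevel set of phi bounds |w(h)| by
     sum_v |k kappa(v) + (leg weights at v)| whenever some t in c_w is positive at h.
     As c_w only depends on w restricted to that support, only finitely many cones,
     hence finitely many faces, occur. *)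

From HB Require Import structures.
From mathcomp Require Import all_boot all_order all_algebra.
From mathcomp Require Import boolp classical_sets cardinality.
From mathcomp Require Import lra zify.
Set Implicit Arguments. Unset Strict Implicit. Unset Printing Implicit Defensive.
Import Order.TTheory GRing.Theory Num.Theory.
Local Open Scope ring_scope.
Local Open Scope classical_set_scope.

Section Cones.
Variable E : finType.
Local Notation vec := (E -> rat).

Definition orthant_cap (L : vec -> Prop) : set vec :=
  [set t | (forall e, 0 <= t e) /\ L t].

Definition lincomb_closed (L : vec -> Prop) : Prop :=
  L (fun _ => 0) /\
  forall u t c d, L u -> L t -> L (fun e => c * u e + d * t e).

Lemma lin_combr (a u t : vec) c d :
  lin a (fun e => c * u e + d * t e) = c * lin a u + d * lin a t.
Proof.
rewrite /lin !mulr_sumr -big_split; apply: eq_bigr => e _ /=.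
by rewrite mulrDr !(mulrCA (a e)).
Qed.

Lemma linDl (a b t : vec) : lin (fun e => a e + b e) t = lin a t + lin b t.
Proof. by rewrite /lin -big_split; apply: eq_bigr => e _; rewrite mulrDl. Qed.

Lemma lin_ge0 (a t : vec) : (forall e, 0 <= a e) -> (forall e, 0 <= t e) ->
  0 <= lin a t.
Proof. by move=> a0 t0; apply: sumr_ge0 => e _; apply: mulr_ge0. Qed.

Lemma lin_eq0 (a t : vec) : (forall e, 0 <= a e) -> (forall e, 0 <= t e) ->
  lin a t = 0 <-> forall e, a e != 0 -> t e = 0.
Proof.
move=> a0 t0; rewrite /lin; split.
- move=> /eqP; rewrite psumr_eq0 => [/allP at0 e nz|e _]; last exact: mulr_ge0.
  by move: (at0 e (mem_index_enum e)); rewrite mulf_eq0 (negbTE nz) => /eqP.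
- move=> at0; rewrite big1 // => e _.
  by have [->|/at0 ->] := eqVneq (a e) 0; rewrite ?mul0r ?mulr0.
Qed.

Lemma linDl_eq0 (a b t : vec) : (forall e, 0 <= a e) -> (forall e, 0 <= b e) ->
  (forall e, 0 <= t e) ->
  lin (fun e => a e + b e) t = 0 <-> lin a t = 0 /\ lin b t = 0.
Proof.
move=> a0 b0 t0; rewrite linDl; have := lin_ge0 a0 t0; have := lin_ge0 b0 t0.
by split=> [|[-> ->]]; [move=> ab0; split; lra | rewrite addr0].
Qed.

Lemma lin_delta (e : E) (t : vec) : lin (fun e' => (e' == e)%:R) t = t e.
Proof.
rewrite /lin (bigD1 e) //= eqxx mul1r big1 ?addr0 // => e' /negbTE ne.
by rewrite ne mul0r.
Qed.

Lemma exists_max_support (Q : set vec) : Q (fun _ => 0) ->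
  (forall u t, Q u -> Q t -> Q (fun e => u e + t e)) ->
  (forall t, Q t -> forall e, 0 <= t e) ->
  exists2 u, Q u & forall e, (exists2 t, Q t & t e != 0) -> 0 < u e.
Proof.
move=> Q0 QD Qge0.
suff [u Qu upos] : exists2 u, Q u &
    forall e, e \in index_enum E -> (exists2 t, Q t & t e != 0) -> 0 < u e.
  by exists u => // e; apply: upos; rewrite mem_index_enum.
elim: (index_enum E) => [|e r [u Qu upos]]; first by exists (fun _ => 0).
have [[t Qt te]|] := pselect (exists2 t, Q t & t e != 0); last first.
  by move=> noe; exists u => // e'; rewrite inE => /orP [/eqP -> //|]; apply: upos.
exists (fun e => u e + t e); first exact: QD.
move=> e' /=; rewrite inE => /orP [/eqP -> _|/upos up /up ue].
  by apply: ltr_wpDl; [exact: Qge0 _ Qu _ | rewrite lt_def te Qge0].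
by apply: ltr_wpDr; [exact: Qge0 _ Qt _ | exact: ue].
Qed.

Lemma exists_dominating_scale (u t : vec) : (forall e, 0 <= u e) ->
  (forall e, u e = 0 -> t e = 0) ->
  exists2 c, 0 <= c & forall e, t e <= c * u e.
Proof.
move=> u0 tu; exists (\sum_e `|t e| / u e) => [|e].
  by apply: sumr_ge0 => e _; rewrite divr_ge0.
have [/tu ->|une] := eqVneq (u e) 0.
  by rewrite mulr_ge0 ?sumr_ge0 // => e' _; rewrite divr_ge0.
have up : 0 < u e by rewrite lt_def une u0.
rewrite -ler_pdivrMr // (bigD1 e) //=; apply: ler_wpDr.
  by apply: sumr_ge0 => e' _; rewrite divr_ge0.
by rewrite ler_pM2r ?invr_gt0 // ler_norm.
Qed.

Lemma lin_zero_indicator_eq0 (u t : vec) : (forall e, 0 <= t e) ->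
  lin (fun e => (u e == 0)%:R) t = 0 <-> forall e, u e = 0 -> t e = 0.
Proof.
move=> t0; have ind0 e : 0 <= ((u e == 0)%:R : rat) by exact: ler0n.
apply: iff_trans (lin_eq0 ind0 t0) _; split=> tu e.
  by move=> ue; apply: tu; rewrite ue eqxx oner_eq0.
by move=> nz; apply/tu/eqP; move: nz; case: (u e == 0); rewrite ?eqxx.
Qed.

Lemma lincomb_closed_lin_eq0 L (b : vec) : lincomb_closed L ->
  lincomb_closed (fun t => L t /\ lin b t = 0).
Proof.
move=> [L0 LC]; split.
  by split=> //; rewrite /lin big1 // => e _; rewrite mulr0.
move=> u t c d [Lu bu] [Lt bt].
by split; [exact: LC | rewrite lin_combr bu bt !mulr0 addr0].
Qed.

Lemma face_orthant_capP L F : lincomb_closed L ->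
  face F (orthant_cap L) <->
  exists2 b, (forall e, 0 <= b e) & F = orthant_cap (fun t => L t /\ lin b t = 0).
Proof.
move=> [L0 LC]; split=> [[a [a_ge0 Fe]]|[b b0 Fe]]; rewrite {}Fe; last first.
  exists b; split=> [t [t0 _]|]; first exact: lin_ge0.
  apply/seteqP; split=> t /=; first by move=> [t0 [Lt bt]].
  by move=> [[t0 Lt] bt].
set Q := [set t | _ /\ _].
have Q0 : Q (fun _ => 0).
  by do !split=> //; rewrite /lin big1 // => e _; rewrite mulr0.
have QD u t : Q u -> Q t -> Q (fun e => u e + t e).
  move=> [[u0 Lu] au] [[t0 Lt] at0]; have -> : (fun e => u e + t e) =
    (fun e => 1 * u e + 1 * t e) by apply: funext => e; rewrite !mul1r.
  split; last by rewrite lin_combr au at0 !mulr0 addr0.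
  by split=> [e|]; [rewrite !mul1r addr_ge0 | exact: LC].
(* The face is cut out by the coordinates where a point of maximal support vanishes. *)
have [u [[u0 Lu] au] upos] := exists_max_support Q0 QD (fun t Qt => Qt.1.1).
exists (fun e => (u e == 0)%:R) => [e|]; first exact: ler0n.
apply/seteqP; split=> t /=; last move=> [t0 [Lt bt]].
  move=> [[t0 Lt] at0]; do 2!split=> //; apply/lin_zero_indicator_eq0 => // e ue.
  apply/eqP/negPn/negP => te.
  by have := upos e (ex_intro2 _ _ t (conj (conj t0 Lt) at0) te); rewrite ue ltxx.
have [c c0 tle] := exists_dominating_scale u0 ((lin_zero_indicator_eq0 _ t0).1 bt).
have Cs : orthant_cap L (fun e => c * u e + (-1) * t e).
  by split=> [e|]; [rewrite mulN1r subr_ge0 | exact: LC].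
have := a_ge0 _ Cs; rewrite lin_combr au mulr0 add0r mulN1r oppr_ge0 => ale0.
by split=> //; apply/le_anti; rewrite ale0 a_ge0.
Qed.

Lemma polyhedral_cone_seq (ineqs eqs : seq vec) :
  polyhedral_cone [set t | (forall a, a \in ineqs -> 0 <= lin a t) /\
                           (forall a, a \in eqs -> lin a t = 0)].
Proof.
pose r := ineqs ++ eqs ++ map (fun a e => - a e) eqs.
have linN a t : lin (fun e => - a e) t = - lin a t.
  by rewrite /lin -sumrN; apply: eq_bigr => e _; rewrite mulNr.
exists (size r), (fun j => nth (fun _ => 0) r j); apply/seteqP; split=> t /=.
  move=> [ti te] j; have : nth (fun _ => 0) r j \in r by rewrite mem_nth.
  rewrite !mem_cat => /or3P [/ti //|/te ->//|/mapP [a /te at0 ->]].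
  by rewrite linN at0 oppr0.
move=> rt; have {}rt a : a \in r -> 0 <= lin a t.
  by move=> /(nthP (fun _ => 0)) [j jr <-]; exact: (rt (Ordinal jr)).
split=> a ain; first by apply: rt; rewrite mem_cat ain.
apply/le_anti; rewrite rt ?mem_cat ?ain ?orbT // andbT -oppr_ge0 -linN.
by apply: rt; rewrite !mem_cat (map_f (fun a e => - a e)) ?orbT.
Qed.

End Cones.

Lemma nuniq_map_split (T U : eqType) (f : T -> U) (s : seq T) :
  ~~ uniq (map f s) -> exists a x b y c, s = a ++ x :: b ++ y :: c /\ f x = f y.
Proof.
elim: s => [|z s IH] //=; rewrite negb_and negbK => /orP [/mapP [y ys fzy]|].
  by case/splitPr: ys fzy => b c fzy; exists [::], z, b, y, c.
by move/IH => [a [x [b [y [c [-> fxy]]]]]]; exists (z :: a), x, b, y, c.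
Qed.

Fixpoint seqs_upto (T : finType) (n : nat) : seq (seq T) :=
  if n is n'.+1 then [::] :: [seq x :: s | x <- enum T, s <- seqs_upto T n']
  else [:: [::]].

Lemma mem_seqs_upto (T : finType) n (s : seq T) :
  (size s <= n)%N -> s \in seqs_upto T n.
Proof.
elim: n s => [|n IH] [|x s] //= sz; rewrite inE; apply/orP; right.
by apply: (allpairs_f (fun x s => x :: s)); [rewrite mem_enum | apply: IH].
Qed.

Section Graph.
Variables (V H : finType) (endp : H -> V) (i : H -> H).
Hypothesis i_inv : involutive i.

Local Notation leg := (is_leg i).
Local Notation tval := (tval i).

Definition eset (h : H) : {set H} := finset.set1 h :|: finset.set1 (i h).

Lemma leg_i h : leg (i h) = leg h.
Proof. by rewrite /is_leg i_inv eq_sym. Qed.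

Lemma tval_i t h : tval t (i h) = tval t h.
Proof. by rewrite /tval i_inv finset.setUC. Qed.

Lemma tval_ge0 t h : (forall e, 0 <= t e) -> 0 <= tval t h.
Proof. by move=> t0; rewrite /tval; case: insub. Qed.

Lemma tval_comb u t c d h :
  tval (fun e => c * u e + d * t e) h = c * tval u h + d * tval t h.
Proof. by rewrite /tval; case: insub => //; rewrite !mulr0 addr0. Qed.

Lemma tval_leg t h : leg h -> tval t h = 0.
Proof.
rewrite /is_leg => /eqP ih; rewrite /tval; case: insubP => // e + _.
rewrite ih finset.setUid => /existsP [h' /andP [nl /eqP eh]].
have : h' \in finset.set1 h by rewrite eh !inE eqxx.
have : i h' \in finset.set1 h by rewrite eh !inE eqxx orbT.
by rewrite !inE => /eqP ih' /eqP hh; rewrite ih' hh eqxx in nl.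
Qed.

Definition edge_fun (r : seq H) (c : H -> rat) : Edge i -> rat :=
  fun e => \sum_(h <- r) c h * (val e == eset h)%:R.

Lemma lin_edge_fun r c t : lin (edge_fun r c) t = \sum_(h <- r) c h * tval t h.
Proof.
rewrite /lin /edge_fun; under eq_bigr do rewrite mulr_suml.
rewrite exchange_big; apply: eq_bigr => h _; rewrite /tval -/(eset h).
case: insubP => [e0 _ e0h|not_edge].
  rewrite (bigD1 e0) //= -e0h eqxx mulr1 big1 ?addr0 // => e ne.
  by rewrite val_eqE (negbTE ne) mulr0 mul0r.
rewrite big1 ?mulr0 // => e _; case: eqP => [ve|_]; last by rewrite !mulr0 mul0r.
by move: not_edge; rewrite -ve (valP e).
Qed.

Fixpoint walk (u : V) (s : seq H) (v : V) : Prop :=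
  if s is h :: s' then [/\ ~~ leg h, endp h = u & walk (endp (i h)) s' v]
  else u = v.

Lemma walk_cat u a b v : walk u (a ++ b) v <-> exists2 x, walk u a x & walk x b v.
Proof.
elim: a u => [|h a IH] u /=; first by split=> [|[x -> //]]; exists u.
split=> [[nl eh /IH [x W1 W2]]|[x [nl eh W1] W2]]; first by exists x.
by split=> //; apply/IH; exists x.
Qed.

Lemma walk_rev u s v : walk u s v -> walk v (rev (map i s)) u.
Proof.
elim: s u => [|h s IH] u /=; first by move->.
move=> [nl eh W]; rewrite rev_cons -cats1; apply/walk_cat.
by exists (endp (i h)); [exact: IH | rewrite /= leg_i i_inv].
Qed.

Lemma walk_of_connect u v : connect (adj endp i) u v -> exists s, walk u s v.
Proof.
move/connectP => [p + ->]; elim: p u => [|z p IH] u /=; first by exists [::].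
move=> /andP [/existsP [h /and3P [nl /eqP eh /eqP eih]] /IH [s W]].
by exists (h :: s); rewrite /= eih.
Qed.

Lemma walk_nonleg u s v : walk u s v -> all (fun h => ~~ leg h) s.
Proof. by elim: s u => //= h s IH u [nl _ /IH ->]; rewrite nl. Qed.

Lemma closed_walk_cycle u s : walk u s u -> s != [::] ->
  uniq (map endp s) -> uniq (map eset s) -> is_cycle endp i s.
Proof.
move=> W sn ue ues; apply/and5P; split=> //; first by rewrite size_eq0.
  exact: walk_nonleg W.
case: s sn W {ue ues} => // h p _ /= [_ eh].
elim: p {1 2}h => [|h' p IH] h0 /=; first by move->; rewrite eh eqxx.
by move=> [_ <- /IH ->]; rewrite eqxx.
Qed.

Lemma walk_split_vertex u a x b y c : walk u (a ++ x :: b ++ y :: c) u ->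
  endp x = endp y -> walk (endp x) (x :: b) (endp x) /\ walk u (a ++ y :: c) u.
Proof.
move/walk_cat=> [p Wa /= [nlx exp /walk_cat [q Wb /= [nly eyq Wc]]]] exy.
split; first by split=> //; rewrite exy eyq.
by apply/walk_cat; exists p => //=; split=> //; rewrite -exy.
Qed.

Lemma walk_split_reversal u a x b c : walk u (a ++ x :: b ++ i x :: c) u ->
  walk (endp (i x)) b (endp (i x)) /\ walk u (a ++ c) u.
Proof.
move/walk_cat=> [p Wa /= [nlx exp /walk_cat [q Wb /= [nly eyq Wc]]]].
split; first by rewrite {2}eyq.
by apply/walk_cat; exists p; rewrite // -exp -[x]i_inv.
Qed.

Lemma sum_grad_divfree (d : H -> rat) (phi : V -> rat) :
  (forall h, d (i h) = - d h) -> (forall v, \sum_(h | endp h == v) d h = 0) ->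
  \sum_h d h * (phi (endp (i h)) - phi (endp h)) = 0.
Proof.
move=> d_oppi d_div.
have sum_tail : \sum_h d h * phi (endp h) = 0.
  rewrite (partition_big endp predT) //= big1 // => v _.
  rewrite (eq_bigr (fun h => d h * phi v)) => [|h /eqP -> //].
  by rewrite -mulr_suml d_div mul0r.
under eq_bigr do rewrite mulrBr.
rewrite sumrB sum_tail subr0 (reindex_inj (inv_inj i_inv)) /=.
under eq_bigr do rewrite i_inv d_oppi mulNr.
by rewrite sumrN sum_tail oppr0.
Qed.

Section ExactFlows.
Variable f : H -> rat.
Hypothesis f_oppi : forall h, f (i h) = - f h.
Hypothesis f_cycle : forall s, is_cycle endp i s -> \sum_(h <- s) f h = 0.

Lemma closed_walk_sum0 u s : walk u s u -> \sum_(h <- s) f h = 0.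
Proof.
elim: {s}(size s).+1 {-2}s (ltnSn (size s)) u => // n IH s s_le u W.
have split_vertex a x b y c : s = a ++ x :: b ++ y :: c -> endp x = endp y ->
    \sum_(h <- s) f h = 0.
  move=> sE exy; rewrite sE in s_le W *.
  have [W1 W2] := walk_split_vertex W exy.
  move: s_le; rewrite !size_cat /= size_cat /= => s_le.
  have lt1 : (size (x :: b) < n)%N by rewrite /=; lia.
  have lt2 : (size (a ++ y :: c) < n)%N by rewrite size_cat /=; lia.
  have := IH _ lt1 _ W1; have := IH _ lt2 _ W2.
  by rewrite -cat_cons !big_cat /= => E2 ->; rewrite add0r.
have split_reversal a x b c : s = a ++ x :: b ++ i x :: c -> \sum_(h <- s) f h = 0.
  move=> sE; rewrite sE in s_le W *; have [W1 W2] := walk_split_reversal W.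
  move: s_le; rewrite !size_cat /= size_cat /= => s_le.
  have lt1 : (size b < n)%N by lia.
  have lt2 : (size (a ++ c) < n)%N by rewrite size_cat; lia.
  have := IH _ lt1 _ W1; have := IH _ lt2 _ W2.
  rewrite !big_cat /= !big_cons /= !big_cat /= !big_cons /= f_oppi; lra.
have [uv|] := boolP (uniq (map endp s)); last first.
  by move/nuniq_map_split => [a [x [b [y [c [sE exy]]]]]]; exact: split_vertex sE exy.
have [ue|] := boolP (uniq (map eset s)); last first.
  move/nuniq_map_split => [a [x [b [y [c [sE exy]]]]]].
  have : y \in eset x by rewrite exy !inE eqxx.
  rewrite !inE => /orP [/eqP yx|/eqP yix].
    by apply: split_vertex sE _; rewrite yx.
  by apply: (split_reversal a x b c); rewrite sE yix.
have [->|sn] := eqVneq s [::]; first by rewrite big_nil.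
exact/f_cycle/(closed_walk_cycle W sn uv ue).
Qed.

Lemma exact_flow_potential (r : V) : graph_connected endp i ->
  exists phi : V -> rat, forall h, ~~ leg h -> f h = phi (endp (i h)) - phi (endp h).
Proof.
move=> conn; pose phi v := \sum_(h <- sval (cid (walk_of_connect (conn r v)))) f h.
exists phi => h nl; rewrite /phi; case: cid => q Wq; case: cid => p Wp /=.
have W : walk r (p ++ h :: rev (map i q)) r.
  by apply/walk_cat; exists (endp h) => //=; split=> //; exact: walk_rev.
have := closed_walk_sum0 W; rewrite big_cat /= big_cons /= big_rev /= big_map /=.
have -> : \sum_(j <- q) f (i j) = - \sum_(j <- q) f j.
  by rewrite -sumrN; apply: eq_bigr => j _; rewrite f_oppi.
lra.
Qed.

End ExactFlows.

Section Weightings.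
Variables (g : V -> nat) (k : int) (legw : H -> int).
Hypothesis conn : graph_connected endp i.

Local Notation Wg := (W_Gamma endp i g k legw).
Local Notation cone := (cone_w endp i).
Local Notation FG := (F_Gamma endp i g k legw).

Definition cycle_balanced (w : H -> int) (t : Edge i -> rat) : Prop :=
  forall s, is_cycle endp i s -> \sum_(h <- s) (w h)%:~R * tval t h = 0.

Lemma lincomb_closed_cycle_balanced w : lincomb_closed (cycle_balanced w).
Proof.
split=> [s _|u t c d Lu Lt s cs].
  by rewrite big1 // => h _; rewrite /tval; case: insub; rewrite ?mulr0.
rewrite (eq_bigr (fun h => c * ((w h)%:~R * tval u h) + d * ((w h)%:~R * tval t h))).
  by rewrite big_split /= -!mulr_sumr Lu // Lt // !mulr0 addr0.
by move=> h _; rewrite tval_comb mulrDr !(mulrCA (w h)%:~R).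
Qed.

Lemma cycle_balanced_eq w w' t : (forall h, tval t h != 0 -> w h = w' h) ->
  cycle_balanced w t -> cycle_balanced w' t.
Proof.
move=> ww' Lw s cs; rewrite -[RHS](Lw s cs); apply: eq_bigr => h _.
by have [->|/ww' ->] := eqVneq (tval t h) 0; rewrite ?mulr0.
Qed.

Lemma W_Gamma_oppi w : Wg w -> forall h, ~~ leg h -> w (i h) = - w h.
Proof. by move=> [[w_oppi _] _] h nl; apply/eqP; rewrite -addr_eq0 addrC w_oppi. Qed.

Lemma W_Gamma_div w v : Wg w -> \sum_(h | endp h == v) w h = - (k * kappa endp i g v).
Proof. by move=> [[_ w_div] _]; apply/eqP; rewrite -addr_eq0 w_div. Qed.

Lemma cone_potential (z : H -> int) t (r : V) :
  (forall h, ~~ leg h -> z (i h) = - z h) -> cycle_balanced z t ->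
  exists phi : V -> rat,
    forall h, ~~ leg h -> (z h)%:~R * tval t h = phi (endp (i h)) - phi (endp h).
Proof.
move=> z_oppi zt; apply: exact_flow_potential => // h.
have [lh|nl] := boolP (leg h); first by rewrite (eqP lh) tval_leg // mulr0 oppr0.
by rewrite z_oppi // tval_i rmorphN mulNr.
Qed.

Definition sq_diff (w w' : H -> int) : Edge i -> rat :=
  edge_fun (index_enum H) (fun h => ((w h - w' h)%:~R) ^+ 2).

Lemma sq_diff_ge0 w w' e : 0 <= sq_diff w w' e.
Proof. by apply: sumr_ge0 => h _; rewrite mulr_ge0 ?sqr_ge0 ?ler0n. Qed.

Lemma lin_sq_diff_eq0 w w' t : (forall e, 0 <= t e) ->
  lin (sq_diff w w') t = 0 <-> forall h, tval t h != 0 -> w h = w' h.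
Proof.
move=> t0; rewrite lin_edge_fun; split=> [sum0 h th|agree].
  have term_ge0 h' : true -> 0 <= ((w h' - w' h')%:~R) ^+ 2 * tval t h'.
    by rewrite mulr_ge0 ?sqr_ge0 ?tval_ge0.
  move/eqP: (psumr_eq0P term_ge0 sum0 (i := h) isT).
  by rewrite mulf_eq0 sqrf_eq0 (negbTE th) orbF intr_eq0 subr_eq0 => /eqP.
rewrite big1 // => h _.
by have [->|/agree ->] := eqVneq (tval t h) 0; rewrite ?mulr0 ?subrr ?mul0r.
Qed.

Lemma W_Gamma_cone_agree w w' t h : Wg w -> Wg w' -> cone w t -> cone w' t ->
  tval t h != 0 -> w h = w' h.
Proof.
move=> Ww Ww' [t0 Lw] [_ Lw'] th.
pose z x := w x - w' x; pose d x := ((z x)%:~R : rat).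
have z_leg x : leg x -> z x = 0 by move=> lx; rewrite /z Ww.2 // Ww'.2 // subrr.
have z_oppi x : z (i x) = - z x.
  have [lx|nl] := boolP (leg x); first by rewrite (eqP lx) z_leg ?oppr0.
  by rewrite /z !W_Gamma_oppi // opprB opprK addrC.
have d_oppi x : d (i x) = - d x by rewrite /d z_oppi rmorphN.
have d_div v : \sum_(x | endp x == v) d x = 0.
  by rewrite -rmorph_sum sumrB !W_Gamma_div // subrr.
have zt : cycle_balanced z t.
  move=> s cs; under eq_bigr do rewrite intrD intrN mulrDl mulNr.
  by rewrite big_split sumrN /= Lw // Lw' // subrr.
have [phi Hphi] := cone_potential (endp h) (fun x _ => z_oppi x) zt.
(* d is divergence free and d t is the gradient of phi. *)
have sum0 : lin (sq_diff w w') t = 0.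
  rewrite lin_edge_fun -[RHS](sum_grad_divfree phi d_oppi d_div).
  apply: eq_bigr => x _; rewrite expr2 -mulrA.
  have [lx|nl] := boolP (leg x); last by rewrite -Hphi.
  by move: (z_leg x lx); rewrite /d /z => ->; rewrite !mul0r.
exact: (lin_sq_diff_eq0 _ _ t0).1 sum0 h th.
Qed.

Definition weight_bound : int :=
  \sum_v `|k * kappa endp i g v + \sum_(h | (endp h == v) && leg h) legw h|.

Lemma W_Gamma_nonleg_div w v : Wg w ->
  \sum_(h | (endp h == v) && ~~ leg h) w h =
  - (k * kappa endp i g v + \sum_(h | (endp h == v) && leg h) legw h).
Proof.
move=> Ww; apply/eqP; rewrite -addr_eq0; apply/eqP.
rewrite -[RHS](Ww.1.2 v) (bigID leg (fun h => endp h == v)) /=.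
rewrite [X in _ = X + _ + _](eq_bigr legw) => [|h /andP [_ lh]]; last by rewrite Ww.2.
by rewrite addrCA addrC; congr (_ + _); exact: addrC.
Qed.

Lemma sum_nonleg_cut (z : H -> int) (U : pred V) :
  (forall h, ~~ leg h -> z (i h) = - z h) ->
  \sum_(h | ~~ leg h && U (endp h)) z h =
  \sum_(h | [&& ~~ leg h, U (endp h) & ~~ U (endp (i h))]) z h.
Proof.
move=> z_oppi; rewrite (bigID (fun h => U (endp (i h)))) /=.
set X := \sum_(h | _ && U _) z h.
suff XN : X = - X.
  have -> : X = 0 by lia.
  by rewrite add0r; apply: eq_bigl => h; rewrite andbA.
rewrite {1}/X (reindex_inj (inv_inj i_inv)) /= -sumrN.
apply: eq_big => [h|h /andP [/andP [nl _] _]]; first by rewrite i_inv leg_i andbAC.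
by rewrite z_oppi // -leg_i.
Qed.

Lemma weight_le_bound w t h : Wg w -> cone w t -> 0 < tval t h -> w h <= weight_bound.
Proof.
move=> Ww [t0 Lw] th.
have nl : ~~ leg h by apply/negP => /(tval_leg t) lh; rewrite lh ltxx in th.
have [wh_le0|wh_gt0] := lerP (w h) 0.
  by apply: le_trans wh_le0 _; apply: sumr_ge0.
have [phi Hphi] := cone_potential (endp h) (W_Gamma_oppi Ww) Lw.
(* Half-edges leaving the sublevel set U carry positive flow, hence nonnegative weight,
   and together they carry the net weight of the vertices of U. *)
pose U := [pred x | phi x <= phi (endp h)].
have cut_pos h' : [&& ~~ leg h', U (endp h') & ~~ U (endp (i h'))] -> 0 <= w h'.
  case/and3P=> nl' Ut nUh; have : 0 < (w h')%:~R * tval t h'.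
    by rewrite Hphi // subr_gt0; move: Ut nUh; rewrite /U /= -ltNge; apply: le_lt_trans.
  apply: contraTT; rewrite -ltNge -leNgt => wlt.
  by apply: mulr_le0_ge0; [rewrite lerz0 ltW | exact: tval_ge0].
have h_cut : [&& ~~ leg h, U (endp h) & ~~ U (endp (i h))].
  by rewrite nl /U /= lexx -ltNge -subr_gt0 -Hphi // mulr_gt0 ?ltr0z.
apply: (le_trans (y := \sum_(h' | [&& ~~ leg h', U (endp h') & ~~ U (endp (i h'))])
                           w h')).
  by rewrite (bigD1 h) //= lerDl sumr_ge0 // => h' /andP [/cut_pos].
rewrite -sum_nonleg_cut; last exact: W_Gamma_oppi.
rewrite (partition_big endp U) /=; last by move=> h' /andP [].
apply: (le_trans (y := \sum_(v | U v)
    `|k * kappa endp i g v + \sum_(h | (endp h == v) && leg h) legw h|)).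
  apply: ler_sum => v Uv; rewrite -normrN -(W_Gamma_nonleg_div v Ww).
  rewrite (eq_bigl (fun h' => (endp h' == v) && ~~ leg h')) ?ler_norm // => h'.
  by case: (eqVneq (endp h') v) => [->|]; rewrite ?Uv ?andbT ?andbF.
by rewrite /weight_bound [leRHS](bigID U) /= lerDl sumr_ge0.
Qed.

Lemma abs_weight_le_bound w t h : Wg w -> cone w t -> 0 < tval t h ->
  `|w h| <= weight_bound.
Proof.
move=> Ww Ct th; have nl : ~~ leg h.
  by apply/negP => /(tval_leg t) lh; rewrite lh ltxx in th.
have [wh_ge0|wh_lt0] := lerP 0 (w h).
  by rewrite ger0_norm ?(weight_le_bound Ww Ct).
rewrite ltr0_norm // -W_Gamma_oppi //; apply: (weight_le_bound Ww Ct).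
by rewrite tval_i.
Qed.

Lemma F_GammaP F : FG F <-> exists w a, [/\ Wg w, forall e, 0 <= a e &
  F = orthant_cap (fun t => cycle_balanced w t /\ lin a t = 0)].
Proof.
have Lw := lincomb_closed_cycle_balanced.
split=> [[w [Ww /(face_orthant_capP _ (Lw w)) [a a0 ->]]]|[w [a [Ww a0 ->]]]].
  by exists w, a.
by exists w; split=> //; apply/(face_orthant_capP _ (Lw w)); exists a.
Qed.

Lemma F_Gamma_face C F : FG C -> face F C -> FG F.
Proof.
move=> /F_GammaP [w [a [Ww a0 ->]]].
have Lwa := lincomb_closed_lin_eq0 a (lincomb_closed_cycle_balanced w).
move/(face_orthant_capP _ Lwa) => [b b0 ->].
apply/F_GammaP; exists w, (fun e => a e + b e).
split=> // [e|]; first by rewrite addr_ge0.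
apply/seteqP; split=> t /=.
  by move=> [t0 [[Lt la] lb]]; do 2!split=> //; apply/(linDl_eq0 a0 b0 t0).
by move=> [t0 [Lt /(linDl_eq0 a0 b0 t0) [la lb]]].
Qed.

Lemma cycle_size s : is_cycle endp i s -> (size s <= #|V|)%N.
Proof.
move=> /and5P [_ _ _ uv _]; rewrite -(size_map endp) cardE.
by apply: uniq_leq_size uv _ => x _; rewrite mem_enum.
Qed.

Lemma F_Gamma_polyhedral C : FG C -> polyhedral_cone C.
Proof.
move=> /F_GammaP [w [a [Ww a0 ->]]].
pose cycles := [seq s <- seqs_upto H #|V| | is_cycle endp i s].
pose coords : seq (Edge i -> rat) :=
  [seq (fun e' => (e' == e)%:R) | e <- index_enum (Edge i)].
pose eqs : seq (Edge i -> rat) :=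
  a :: [seq edge_fun s (fun h => (w h)%:~R) | s <- cycles].
suff -> : orthant_cap (fun t => cycle_balanced w t /\ lin a t = 0) =
    [set t | (forall b, b \in coords -> 0 <= lin b t) /\
             (forall b, b \in eqs -> lin b t = 0)].
  exact: polyhedral_cone_seq.
apply/seteqP; split=> t /= [t0 t1].
  split=> b; first by move=> /mapP [e _ ->]; rewrite lin_delta.
  rewrite inE => /orP [/eqP ->|/mapP [s + ->]]; first exact: t1.2.
  by rewrite mem_filter lin_edge_fun => /andP [cs _]; apply: t1.1.
split=> [e|]; first by have := t0 _ (map_f _ (mem_index_enum e)); rewrite lin_delta.
split=> [s cs|]; last exact/t1/mem_head.
have sc : s \in cycles by rewrite /cycles mem_filter cs mem_seqs_upto ?cycle_size.
by rewrite -lin_edge_fun; apply: t1; rewrite /eqs inE (map_f _ sc) orbT.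
Qed.

Lemma F_Gamma_meet_face C D : FG C -> FG D -> face (C `&` D) C.
Proof.
move=> /F_GammaP [w [a [Ww a0 ->]]] /F_GammaP [w' [b [Ww' b0 ->]]].
have Lwa := lincomb_closed_lin_eq0 a (lincomb_closed_cycle_balanced w).
apply/(face_orthant_capP _ Lwa).
have sq0 := @sq_diff_ge0 w w'.
exists (fun e => b e + sq_diff w w' e) => [e|]; first exact: addr_ge0 (b0 e) (sq0 e).
apply/seteqP; split=> t /=.
  move=> [[t0 [Lt la]] [_ [Lt' lb]]]; do 2!split=> //.
  apply/(linDl_eq0 b0 sq0 t0); split=> //.
  by apply/(lin_sq_diff_eq0 _ _ t0) => h; apply: W_Gamma_cone_agree.
move=> [t0 [[Lt la] /(linDl_eq0 b0 sq0 t0) [lb /(lin_sq_diff_eq0 _ _ t0) agree]]].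
by do 3!split=> //; exact: cycle_balanced_eq agree Lt.
Qed.

Definition in_support w h : Prop := exists2 t, cone w t & 0 < tval t h.

Local Notation B := (absz weight_bound).
Local Notation key := {ffun H -> option 'I_(B.*2).+1}.

(* The restriction of w to its support, shifted by B into a finite type. *)
Definition weight_key w : key :=
  [ffun h => if `[< in_support w h >] then Some (inord (absz (w h + B%:Z))) else None].

Definition key_weight (kw : key) h : int := if kw h is Some j then j%:Z - B%:Z else 0.

Lemma key_weightK w h : Wg w -> in_support w h -> key_weight (weight_key w) h = w h.
Proof.
move=> Ww [t Ct th]; have := abs_weight_le_bound Ww Ct th.
rewrite /key_weight ffunE; case: asboolP => [_|[]]; last by exists t.
move=> wh_le; rewrite inordK; lia.
Qed.

Definition key_cone (kw : key) : set (Edge i -> rat) :=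
  [set t | cone (key_weight kw) t /\ forall h, kw h = None -> tval t h = 0].

Lemma cone_weight_key w : Wg w -> cone w = key_cone (weight_key w).
Proof.
move=> Ww; have in_supp t h : cone w t -> tval t h != 0 -> in_support w h.
  by move=> Ct th; exists t; rewrite // lt_def th tval_ge0 //; case: Ct.
apply/seteqP; split=> t /=.
  move=> Ct; have [t0 Lt] := Ct; split.
    split=> //; apply: cycle_balanced_eq Lt => h th.
    by rewrite key_weightK //; exact: in_supp _ _ Ct th.
  move=> h; rewrite ffunE; case: asboolP => // nsupp _.
  by apply/eqP/negPn/negP => th; exact: nsupp (in_supp _ _ Ct th).
move=> [[t0 Lt] none]; split=> //; apply: cycle_balanced_eq Lt => h th.
have : weight_key w h != None by apply: contra th => /eqP/none ->.
by rewrite ffunE; case: asboolP => // supp _; exact: key_weightK.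
Qed.

Definition key_face (x : key * {set Edge i}) : set (Edge i -> rat) :=
  [set t | key_cone x.1 t /\ forall e, e \in x.2 -> t e = 0].

Lemma F_Gamma_finite : finite_set FG.
Proof.
apply: (@sub_finite_set _ _ (key_face @` setT)); last exact/finite_image/finite_finset.
move=> _ /F_GammaP [w [a [Ww a0 ->]]].
exists (weight_key w, [set e | a e != 0]%SET) => //.
rewrite /key_face /= -cone_weight_key //; apply/seteqP; split=> t /=.
  move=> [[t0 Lt] za]; do 2!split=> //.
  by apply/(lin_eq0 a0 t0) => e ae; apply: za; rewrite inE.
by move=> [t0 [Lt la]]; split=> // e; rewrite inE; exact: (lin_eq0 a0 t0).1 la e.
Qed.

End Weightings.
End Graph.

Theorem corollary3p11 (V H : finType) (endp : H -> V) (i : H -> H)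
  (g : V -> nat) (k : int) (legw : H -> int) :
  involutive i ->
  graph_connected endp i ->
  \sum_(h | is_leg i h) legw h = - k * (2 * genus_total endp i g - 2) ->
  finite_fan (F_Gamma endp i g k legw).
Proof.
(* The degree condition on the leg weights only makes W(Gamma) possibly nonempty;
   the fan property holds regardless. *)
move=> i_inv conn _; split; first exact: F_Gamma_finite.
split.
- by move=> C; exact: F_Gamma_polyhedral.
- by move=> C /F_GammaP [w [a [_ _ ->]]] t [].
- by move=> C F; exact: F_Gamma_face.
- move=> C D FC FD; split; first exact: F_Gamma_meet_face FC FD.
  by rewrite setIC; exact: F_Gamma_meet_face FD FC.
Qed.
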